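(* Let $y$ be a string over an alphabet $\Sigma$ whose last character occurs nowhere else in $y$. For any backward edge $((x,x^R),\alpha^R,(\alpha x, x^R\alpha^R))$ of the affix tree $\mathrm{ATree}(y)$ (with $\alpha\in\Sigma^+$), we have: $x\in\mathcal{L}$ and $\alpha x\notin\mathcal{L}$ if and only if $(x,a,ax)$ is an implicit modified Weiner link of $\mathrm{ST}(y)$, where $a=\alpha[|\alpha|]$ is the last character of $\alpha$.
   Context: $\mathrm{Substr}(y)$ is the set of substrings of $y$; $x^R$ is the reversal of $x$. $\mathrm{BegPos}(x)=\{i\mid y[i..i+|x|-1]=x\}$, $\mathrm{EndPos}(x)=\{i\mid y[i-|x|+1..i]=x\}$. For $x\in\mathrm{Substr}(y)$, $\overrightarrow{x}$ is the longest string $z$ with $\mathrm{BegPos}(z)=\mathrm{BegPos}(x)$ and $\overleftarrow{x}$ is the longest string $z$ with $\mathrm{EndPos}(z)=\mathrm{EndPos}(x)$. $\mathcal{L}=\{\overrightarrow{x}\mid x\in\mathrm{Substr}(y)\}$, $\mathcal{R}=\{\overleftarrow{x}\mid x\in\mathrm{Substr}(y)\}$. The suffix tree $\mathrm{ST}(y)$ has node set $\mathcal{L}$. The set of modified Weiner links of $\mathrm{ST}(y)$ is $\{(x,a,ax)\mid a\in\Sigma, x\in\mathcal{L}, ax\in\mathrm{Substr}(y)\}$; such a link is explicit if $ax\in\mathcal{L}$ and implicit otherwise. $\mathrm{ATree}(y)$ has node set $V_A=\{(x,x^R)\mid x\in\mathcal{L}\cup\mathcal{R}\}$ and backward edge set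 $\{((x,x^R),\alpha^R,(\alpha x, x^R\alpha^R))\mid x^R, x^R\alpha^R\in\{z^R : z\in\mathcal{L}\cup\mathcal{R}\}, \alpha\in\Sigma^+, x^R\alpha^R[1..i]\notin\{z^R : z\in\mathcal{L}\cup\mathcal{R}\}\ \text{for all }1\le i<|\alpha|\}$. *)

(* Positions are 0-based: a string x "begins" at i (0 <= i <= |y|) when
   y[i .. i+|x|-1] = x, and "ends" at i (0 <= i <= |y|) when
   y[i-|x| .. i-1] = x.  The empty string thus begins/ends at every
   position 0..|y| (so it is its own right/left extension = the root). *)
From mathcomp Require Import all_boot.
Set Implicit Arguments. Unset Strict Implicit. Unset Printing Implicit Defensive.

Section Strings.
Variable T : eqType.
Implicit Types (x y z w alpha : seq T) (a : T).

Definition Substr y x : Prop := infix x y.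

Definition BegPos y x : seq nat :=
  [seq i <- iota 0 (size y).+1 |
     (i + size x <= size y) && (take (size x) (drop i y) == x)].

Definition EndPos y x : seq nat :=
  [seq i <- iota 0 (size y).+1 |
     (size x <= i) && (take (size x) (drop (i - size x) y) == x)].

Definition is_rext y x z : Prop :=
  BegPos y z = BegPos y x /\
  forall w, BegPos y w = BegPos y x -> size w <= size z.

Definition is_lext y x z : Prop :=
  EndPos y z = EndPos y x /\
  forall w, EndPos y w = EndPos y x -> size w <= size z.

Definition inL y z : Prop := exists x, Substr y x /\ is_rext y x z.
Definition inR y z : Prop := exists x, Substr y x /\ is_lext y x z.

Definition inRevLR y w : Prop := exists z, (inL y z \/ inR y z) /\ w = rev z.

Definition backward_edge y x alpha : Prop :=
  alpha <> [::] /\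
  inRevLR y (rev x) /\
  inRevLR y (rev x ++ rev alpha) /\
  (forall i, 0 < i < size alpha -> ~ inRevLR y (rev x ++ take i (rev alpha))).

Definition weiner_link y x a : Prop := inL y x /\ Substr y (a :: x).

Definition implicit_weiner_link y x a : Prop :=
  weiner_link y x a /\ ~ inL y (a :: x).

End Strings.

From mathcomp Require Import all_boot zify.
From Stdlib Require Import Classical.

(* Write alpha = b a.  If alpha x is not a node of ST(y) then neither is a x:
   either a x = alpha x, or a x lies strictly between x and alpha x, where the
   backward edge skips every string of L and R.  Conversely, a x and the
   strings between it and alpha x are not in R, so stepping left one character
   at a time shows that every occurrence of a x in y is preceded by b.  The
   occurrences of a x and of alpha x then correspond, and a longer string with
   the begin positions of a x would give, after prefixing b, one with the begin
   positions of alpha x; so alpha x in L forces a x in L. *)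

Set Implicit Arguments. Unset Strict Implicit. Unset Printing Implicit Defensive.

Section Occurrences.
Variables (T : eqType) (y : seq T).
Implicit Types (t u v w z p s : seq T) (a : T).

Lemma mem_BegPos z i :
  (i \in BegPos y z) <-> exists p s, y = p ++ z ++ s /\ size p = i.
Proof.
rewrite /BegPos mem_filter mem_iota add0n; split.
  case/andP=> /andP[Hle /eqP Hz] _.
  exists (take i y), (drop (size z) (drop i y)); split; last first.
    by rewrite size_take; case: ltnP => //; lia.
  by rewrite -{1}Hz !cat_take_drop.
case=> p [s [-> <-]]; rewrite !size_cat drop_size_cat // take_size_cat //.
by rewrite eqxx; apply/andP; split; [apply/andP; split|]; lia.
Qed.

Lemma mem_EndPos z i :
  (i \in EndPos y z) <-> exists p s, y = p ++ z ++ s /\ size p + size z = i.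
Proof.
rewrite /EndPos mem_filter mem_iota add0n; split.
  case/andP=> /andP[Hle /eqP Hz] Hi.
  exists (take (i - size z) y), (drop (size z) (drop (i - size z) y)).
  split; last by rewrite size_take; case: ltnP => //; lia.
  by rewrite -{2}Hz !cat_take_drop.
case=> p [s [-> <-]]; rewrite !size_cat addnK drop_size_cat // take_size_cat //.
by rewrite eqxx; apply/andP; split; [apply/andP; split|]; lia.
Qed.

Lemma BegPos_eq z w : BegPos y z =i BegPos y w -> BegPos y z = BegPos y w.
Proof.
move=> Hzw; apply: eq_in_filter => i Hi.
by have := Hzw i; rewrite !mem_filter Hi !andbT.
Qed.

Lemma inL_Substr z : inL y z -> Substr y z.
Proof.
case=> x [/infixP [p [s Hy]] [Hzx _]].
have : size p \in BegPos y x by apply/mem_BegPos; exists p, s.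
by rewrite -Hzx => /mem_BegPos [p' [s' [Hy' _]]]; apply/infixP; exists p', s'.
Qed.

Lemma inR_Substr z : inR y z -> Substr y z.
Proof.
case=> x [/infixP [p [s Hy]] [Hzx _]].
have : size p + size x \in EndPos y x by apply/mem_EndPos; exists p, s.
by rewrite -Hzx => /mem_EndPos [p' [s' [Hy' _]]]; apply/infixP; exists p', s'.
Qed.

Definition left_context t u := forall p s, y = p ++ u ++ s -> exists q, p = q ++ t.

Lemma left_context_cat t t' u :
  left_context t' u -> left_context t (t' ++ u) -> left_context (t ++ t') u.
Proof.
move=> Ht' Ht p s Hy; have [q Ep] := Ht' p s Hy.
have /Ht [r Eq] : y = q ++ (t' ++ u) ++ s by rewrite Hy Ep -!catA.
by exists r; rewrite Ep Eq catA.
Qed.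

Lemma EndPos_left_context v w :
  EndPos y v = EndPos y w -> size w <= size v ->
  left_context (take (size v - size w) v) w.
Proof.
move=> Hvw Hle p s Hy.
have : size p + size w \in EndPos y w by apply/mem_EndPos; exists p, s.
rewrite -Hvw => /mem_EndPos [p' [s' [Hy' Hsize]]].
have /eqP : (p' ++ v) ++ s' = (p ++ w) ++ s by rewrite -!catA -Hy' -Hy.
rewrite eqseq_cat ?size_cat // => /andP [/eqP Evw _].
move: Evw; rewrite -{1}(cat_take_drop (size v - size w) v) catA.
move/eqP; rewrite eqseq_cat; last by rewrite !size_cat size_take; case: ltnP; lia.
by case/andP=> /eqP <- _; exists p'.
Qed.

(* A string v longer than u with the end positions of u exists since u is not
   in R; its extra prefix precedes every occurrence of u, and the occurrence
   inside a :: u shows that this prefix ends with a. *)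
Lemma not_inR_left_context a u :
  Substr y (a :: u) -> ~ inR y u -> left_context [:: a] u.
Proof.
move=> Hau HnR.
have [v Hvu Hlong] : exists2 v, EndPos y v = EndPos y u & size u < size v.
  apply: NNPP => Hno; apply: HnR; exists u.
  split; first exact: (catl_infix (s := [:: a]) Hau).
  split=> // v Hvu; rewrite leqNgt; apply/negP => Hlt.
  by apply: Hno; exists v.
have Hctx := EndPos_left_context Hvu (ltnW Hlong).
have [t [b Ev]] : exists t b, take (size v - size u) v = rcons t b.
  have : size (take (size v - size u) v) != 0 by rewrite size_take; case: ltnP; lia.
  by case/lastP: (take _ v) => // t b _; exists t, b.
rewrite Ev in Hctx.
case/infixP: Hau => p0 [s0 Hy0].
have /Hctx [q0] : y = rcons p0 a ++ u ++ s0 by rewrite Hy0 cat_rcons.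
rewrite -rcons_cat => /rcons_inj [_ ->] p s /Hctx [q ->].
by exists (q ++ t); rewrite -cats1 catA.
Qed.

Lemma left_context_suffixes t u :
  Substr y (t ++ u) ->
  (forall k, 0 < k <= size t -> ~ inR y (drop k t ++ u)) ->
  left_context t u.
Proof.
elim: t => [|a t IHt] Hsub HnR.
  by move=> p s _; exists p; rewrite cats0.
rewrite -cat1s; apply: left_context_cat.
  apply: IHt => [|k Hk]; first exact: (catl_infix (s := [:: a]) Hsub).
  by apply: (HnR k.+1) => /=; lia.
by apply: not_inR_left_context => //; have := HnR 1; rewrite drop1; apply => /=.
Qed.

Lemma BegPos_left_context t u w :
  left_context t u -> BegPos y w = BegPos y u ->
  BegPos y (t ++ w) = BegPos y (t ++ u).
Proof.
move=> Ht Hwu; apply: BegPos_eq => i.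
apply/idP/idP => /mem_BegPos [p [s [Hy <-]]]; apply/mem_BegPos.
  have : size (p ++ t) \in BegPos y u.
    by rewrite -Hwu; apply/mem_BegPos; exists (p ++ t), s; rewrite Hy !catA.
  case/mem_BegPos => p' [s' [Hy' Hsize]]; have [q Ep'] := Ht _ _ Hy'.
  exists q, s'; split; first by rewrite Hy' Ep' -!catA.
  by move: Hsize; rewrite Ep' !size_cat; lia.
have : size (p ++ t) \in BegPos y w.
  by rewrite Hwu; apply/mem_BegPos; exists (p ++ t), s; rewrite Hy !catA.
case/mem_BegPos => p' [s' [Hy' Hsize]].
have /eqP : p' ++ w ++ s' = (p ++ t) ++ u ++ s by rewrite -Hy' Hy !catA.
rewrite eqseq_cat // => /andP [/eqP Ep' _].
by exists p, s'; rewrite Hy' Ep' -!catA.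
Qed.

Lemma inL_left_context t u : left_context t u -> inL y (t ++ u) -> inL y u.
Proof.
move=> Ht Htu; exists u; split; first exact: catl_infix (inL_Substr Htu).
split=> // w Hwu; case: Htu => x [_ [Hx Hmax]].
have /Hmax : BegPos y (t ++ w) = BegPos y x by rewrite (BegPos_left_context Ht Hwu).
by rewrite !size_cat leq_add2l.
Qed.

End Occurrences.

Lemma inRevLR_rev (T : eqType) (y u : seq T) :
  inRevLR y (rev u) <-> inL y u \/ inR y u.
Proof. by split=> [[z [Hz /(can_inj revK) ->]] | Hu] //; exists u. Qed.

Section BackwardEdge.
Variables (T : eqType) (y x alpha : seq T).
Hypothesis Hedge : backward_edge y x alpha.

Lemma backward_edge_Substr : Substr y (alpha ++ x).
Proof.
case: Hedge => _ [_ [+ _]].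
by rewrite -rev_cat inRevLR_rev => -[/inL_Substr | /inR_Substr].
Qed.

Lemma backward_edge_interior k :
  0 < k < size alpha ->
  ~ inL y (drop k alpha ++ x) /\ ~ inR y (drop k alpha ++ x).
Proof.
move=> Hk; case: Hedge => _ [_ [_ Hint]].
have : ~ inRevLR y (rev (drop k alpha ++ x)).
  rewrite rev_cat -(subKn (ltnW (proj2 (andP Hk)))) -take_rev.
  by apply: Hint; lia.
by rewrite inRevLR_rev => Hn; split=> H; apply: Hn; [left | right].
Qed.

End BackwardEdge.

Lemma backward_edge_implicit_weiner_link (T : eqType) (y x alpha : seq T) d :
  backward_edge y x alpha ->
  (inL y x /\ ~ inL y (alpha ++ x)) <-> implicit_weiner_link y x (last d alpha).
Proof.
move=> Hedge; have Hsub := backward_edge_Substr Hedge.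
have Hint := backward_edge_interior Hedge.
case/lastP: alpha Hedge Hsub Hint => [[/(_ erefl)] // | b a] _ Hsub Hint.
have HnR k : 0 < k <= size b -> ~ inR y (drop k b ++ a :: x).
  move=> /andP [Hk0 Hkb]; have [|_] := Hint k; first by rewrite size_rcons ltnS Hk0.
  by rewrite drop_rcons // -cats1 -catA.
have HnL : ~ inL y (b ++ a :: x) -> ~ inL y (a :: x).
  have [-> // | Hb] := eqVneq b [::].
  have [|HnL _ _] := Hint (size b); last by rewrite drop_rcons // drop_size in HnL.
  by rewrite size_rcons ltnS leqnn andbT lt0n size_eq0.
rewrite last_rcons -cats1 -catA /= in Hsub *.
split=> [[HxL Hnot] | [[HxL _] Hnot]].
  by split; [split=> //; exact: catl_infix Hsub | exact: HnL].
split=> // HL; apply: Hnot; apply: inL_left_context HL.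
exact: left_context_suffixes.
Qed.

Theorem theorem7 (T : finType) (y' : seq T) (c : T) (x alpha : seq T) :
  c \notin y' ->
  backward_edge (rcons y' c) x alpha ->
  ((inL (rcons y' c) x /\ ~ inL (rcons y' c) (alpha ++ x)) <->
   implicit_weiner_link (rcons y' c) x (last c alpha)).
Proof. by move=> _; apply: backward_edge_implicit_weiner_link. Qed.
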